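(* For every connected graph $G$, $\gamma_{rdR}(G)\ge \gamma(G)+\gamma_r(G)$. Moreover, equality holds if and only if $G$ is a star $K_{1,m}$ for some $m\ge 1$, or $\gamma_{r2}(G)=\gamma_r(G)=\gamma(G)$.
   Context: All graphs are finite and simple. An RDRD function of $G$ is a function $f:V(G)\to\{0,1,2,3\}$ such that every vertex with value $0$ has at least two neighbors with value $2$ or at least one neighbor with value $3$, every vertex with value $1$ has a neighbor with value $2$ or $3$, and the subgraph induced by the vertices with value $0$ has no isolated vertices; $\gamma_{rdR}(G)$ is the minimum of $\sum_v f(v)$ over RDRD functions. $\gamma(G)$ is the domination number. A restrained dominating set is a set $S\subseteq V(G)$ such that every vertex of $V(G)\setminus S$ has a neighbor in $S$ and a neighbor in $V(G)\setminus S$; $\gamma_r(G)$ is its minimum cardinality. A restrained $2$-dominating set is a set $S$ such that every vertex of $V(G)\setminus S$ has at least two neighbors in $S$ and $G[V(G)\setminus S]$ has no isolated vertices; $\gamma_{r2}(G)$ is its minimum cardinality. *)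

From mathcomp Require Import all_boot.
Set Implicit Arguments. Unset Strict Implicit. Unset Printing Implicit Defensive.

Definition simple_graph (T : finType) (e : rel T) : Prop :=
  symmetric e /\ irreflexive e.

Definition connected_graph (T : finType) (e : rel T) : Prop :=
  0 < #|T| /\ forall x y : T, connect e x y.

Definition nbhd (T : finType) (e : rel T) (v : T) : {set T} := [set u | e v u].

Definition is_rdrd (T : finType) (e : rel T) (f : {ffun T -> 'I_4}) : bool :=
  [forall v,
     ((f v == 0 :> nat) ==>
        ((2 <= #|[set u in nbhd e v | f u == 2 :> nat]|) ||
         [exists u in nbhd e v, f u == 3 :> nat]))
  && ((f v == 1 :> nat) ==> [exists u in nbhd e v, 2 <= f u])
  && ((f v == 0 :> nat) ==> [exists u in nbhd e v, f u == 0 :> nat])].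

Definition weight (T : finType) (f : {ffun T -> 'I_4}) : nat := \sum_(v : T) f v.

(* minimum weight of an RDRD function (the constant function 3 is RDRD, of
   weight 3|V|, so the default value never affects the minimum) *)
Definition gamma_rdR (T : finType) (e : rel T) : nat :=
  \big[minn/(3 * #|T|)]_(f : {ffun T -> 'I_4} | is_rdrd e f) weight f.

Definition is_dominating (T : finType) (e : rel T) (S : {set T}) : bool :=
  [forall v, (v \notin S) ==> [exists u in S, e v u]].

Definition is_restrained_dominating (T : finType) (e : rel T) (S : {set T}) : bool :=
  [forall v, (v \notin S) ==>
     ([exists u in S, e v u] && [exists u in ~: S, e v u])].

Definition is_restrained_2dominating (T : finType) (e : rel T) (S : {set T}) : bool :=
  [forall v, (v \notin S) ==>
     ((2 <= #|S :&: nbhd e v|) && [exists u in ~: S, e v u])].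

(* minima of cardinalities (V itself qualifies in each case) *)
Definition gamma (T : finType) (e : rel T) : nat :=
  \big[minn/#|T|]_(S : {set T} | is_dominating e S) #|S|.
Definition gamma_r (T : finType) (e : rel T) : nat :=
  \big[minn/#|T|]_(S : {set T} | is_restrained_dominating e S) #|S|.
Definition gamma_r2 (T : finType) (e : rel T) : nat :=
  \big[minn/#|T|]_(S : {set T} | is_restrained_2dominating e S) #|S|.

Definition is_star (T : finType) (e : rel T) : Prop :=
  2 <= #|T| /\
  exists c : T, (forall v, v != c -> e c v) /\
                (forall u v, u != c -> v != c -> ~~ e u v).

From mathcomp Require Import all_boot zify.
Set Implicit Arguments. Unset Strict Implicit. Unset Printing Implicit Defensive.

(* Lower bound: for an RDRD function f let V_k be the set of vertices with
   f >= k.  Then w(f) = |V_1| + |V_2| + |V_3|, V_2 is dominating and V_1 is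
   restrained dominating, so gamma + gamma_r <= |V_1| + |V_2| <= w(f).

   Equality: take an optimal f of weight gamma + gamma_r.  Then V_3 is empty
   and V_1 is a minimum restrained dominating set ("f is tight").  If some
   vertex has value 1, removal arguments on V_1 show that every vertex is
   positive, hence gamma_r = |V|, hence every edge has a pendant endpoint, so
   G is a star.  Otherwise V_2 is restrained 2-dominating and
   gamma_r2 <= gamma <= gamma_r <= gamma_r2.

   Converse: a star has gamma_r = |V| and the RDRD function (2 on the centre,
   1 on the leaves) of weight |V| + 1; and 2 on a minimum restrained
   2-dominating set gives gamma_rdR <= 2 gamma_r2. *)

Section MinOverFinType.

Variables (I : finType) (P : pred I) (F : I -> nat) (d : nat).

Lemma bigmin_le i : P i -> \big[minn/d]_(j | P j) F j <= F i.
Proof.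
have : i \in index_enum I by rewrite mem_index_enum.
elim: (index_enum I) => // j r IH; rewrite in_cons big_cons => /orP [/eqP <- | ir] Pi.
  by rewrite Pi geq_minl.
by case: (P j); [apply: leq_trans (geq_minr _ _) (IH ir Pi) | apply: IH].
Qed.

Lemma bigmin_attain i0 : P i0 -> F i0 = d ->
  exists2 i, P i & \big[minn/d]_(j | P j) F j = F i.
Proof.
move=> Pi0 Fi0; apply: (big_rec (fun x => exists2 i, P i & x = F i)).
  by exists i0.
move=> i x Pi Kx; rewrite /minn; case: ltnP => _ //.
by exists i.
Qed.

End MinOverFinType.

Lemma connected_closed_full (T : finType) (e : rel T) (A : {pred T}) :
  symmetric e -> connected_graph e -> (forall x y, e x y -> x \in A -> y \in A) ->
  forall x y, x \in A -> y \in A.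
Proof.
move=> sym [_ conn] clA x y xA.
have csym := sym_connect_sym sym.
by rewrite -(closed_connect (intro_closed csym clA) (conn x y)).
Qed.

Definition level_set (T : finType) (f : {ffun T -> 'I_4}) (k : nat) : {set T} :=
  [set v | k <= f v].

Lemma card_set_pred (T : finType) (b : pred T) :
  \sum_(v : T) (b v : nat) = #|[set v | b v]|.
Proof.
rewrite -sum1_card [RHS]big_mkcond /=; apply: eq_bigr => v _; rewrite inE.
by case: (b v).
Qed.

Lemma weight_levels (T : finType) (f : {ffun T -> 'I_4}) :
  weight f = #|level_set f 1| + #|level_set f 2| + #|level_set f 3|.
Proof.
rewrite /weight /level_set -!card_set_pred -!big_split /=; apply: eq_bigr => v _.
by have := ltn_ord (f v); case: (nat_of_ord (f v)) => [|[|[|[|]]]].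
Qed.

Section GraphParameters.

Variables (T : finType) (e : rel T).

(* Each parameter is bounded by any witness and attained by some witness;
   attainment holds because the whole vertex set (resp. the constant
   function 3) is a witness whose value is the default of the minimum. *)
Lemma gamma_le S : is_dominating e S -> gamma e <= #|S|.
Proof. exact: bigmin_le. Qed.

Lemma gamma_r_le S : is_restrained_dominating e S -> gamma_r e <= #|S|.
Proof. exact: bigmin_le. Qed.

Lemma gamma_r2_le S : is_restrained_2dominating e S -> gamma_r2 e <= #|S|.
Proof. exact: bigmin_le. Qed.

Lemma gamma_rdR_le f : is_rdrd e f -> gamma_rdR e <= weight f.
Proof. exact: bigmin_le. Qed.

Lemma gamma_attain : exists2 S, is_dominating e S & gamma e = #|S|.
Proof.
by apply: (bigmin_attain (i0 := setT)); [apply/forallP => v; rewrite inE | exact: cardsT].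
Qed.

Lemma gamma_r_attain : exists2 S, is_restrained_dominating e S & gamma_r e = #|S|.
Proof.
by apply: (bigmin_attain (i0 := setT)); [apply/forallP => v; rewrite inE | exact: cardsT].
Qed.

Lemma gamma_r2_attain : exists2 S, is_restrained_2dominating e S & gamma_r2 e = #|S|.
Proof.
by apply: (bigmin_attain (i0 := setT)); [apply/forallP => v; rewrite inE | exact: cardsT].
Qed.

Lemma gamma_rdR_attain : exists2 f, is_rdrd e f & gamma_rdR e = weight f.
Proof.
pose three : {ffun T -> 'I_4} := [ffun => inord 3].
have threeE v : three v = 3 :> nat by rewrite ffunE inordK.
apply: (bigmin_attain (i0 := three)).
  by apply/forallP => v; rewrite threeE.
rewrite weight_levels /level_set.
have full k : k <= 3 -> [set v | k <= three v] = setT.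
  by move=> k3; apply/setP => v; rewrite !inE threeE.
by rewrite !full // cardsT; lia.
Qed.

(* A restrained 2-dominating set is restrained dominating, and a restrained
   dominating set is dominating. *)
Lemma gamma_le_gamma_r : gamma e <= gamma_r e.
Proof.
have [S hS ->] := gamma_r_attain; apply: gamma_le.
apply/forallP => v; apply/implyP => vS.
by move/forallP/(_ v): hS; rewrite vS /= => /andP [].
Qed.

Lemma gamma_r_le_gamma_r2 : gamma_r e <= gamma_r2 e.
Proof.
have [S hS ->] := gamma_r2_attain; apply: gamma_r_le.
apply/forallP => v; apply/implyP => vS.
move/forallP/(_ v): hS; rewrite vS /= => /andP [two_nbrs ->]; rewrite andbT.
have /card_gt0P [u] : 0 < #|S :&: nbhd e v| by apply: leq_trans two_nbrs.
by rewrite !inE => /andP [uS evu]; apply/existsP; exists u; rewrite uS.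
Qed.

Lemma gamma_pos : 0 < #|T| -> 0 < gamma e.
Proof.
case/card_gt0P => v _; have [D hD ->] := gamma_attain; apply/card_gt0P.
case vD: (v \in D); first by exists v.
by move/forallP/(_ v): hD; rewrite vD => /existsP [u /andP [uD _]]; exists u.
Qed.

End GraphParameters.

Section RDRDFunction.

Variables (T : finType) (e : rel T) (f : {ffun T -> 'I_4}).
Hypothesis rdrd_f : is_rdrd e f.

Lemma rdrd_zero_strong_nbr v : f v = 0 :> nat -> exists2 u, e v u & 2 <= f u.
Proof.
move: rdrd_f => /forallP /(_ v) /andP [/andP [cond0 _] _] fv; move: cond0.
rewrite fv /= => /orP [two_twos | /existsP [u /andP [un /eqP fu]]].
  have /card_gt0P [u] : 0 < #|[set u in nbhd e v | f u == 2 :> nat]|.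
    exact: leq_trans two_twos.
  by rewrite !inE => /andP [evu /eqP fu]; exists u; rewrite ?fu.
by exists u; [move: un; rewrite inE | rewrite fu].
Qed.

Lemma rdrd_zero_zero_nbr v : f v = 0 :> nat -> exists2 u, e v u & f u = 0 :> nat.
Proof.
move: rdrd_f => /forallP /(_ v) /andP [_ cond0] fv; move: cond0.
by rewrite fv /= => /existsP [u /andP [un /eqP fu]]; exists u; move: un; rewrite ?inE.
Qed.

Lemma rdrd_one_strong_nbr v : f v = 1 :> nat -> exists2 u, e v u & 2 <= f u.
Proof.
move: rdrd_f => /forallP /(_ v) /andP [/andP [_ cond1] _] fv; move: cond1.
by rewrite fv /= => /existsP [u /andP [un fu]]; exists u; move: un; rewrite ?inE.
Qed.

Lemma rdrd_zero_two_twos v : (forall u, f u != 3 :> nat) -> f v = 0 :> nat ->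
  2 <= #|[set u in nbhd e v | f u == 2 :> nat]|.
Proof.
move: rdrd_f => /forallP /(_ v) /andP [/andP [cond0 _] _] no3 fv; move: cond0.
by rewrite fv /= => /orP [// | /existsP [u /andP [_ fu]]]; move: (no3 u); rewrite fu.
Qed.

Lemma rdrd_level2_dominating : is_dominating e (level_set f 2).
Proof.
apply/forallP => v; apply/implyP; rewrite inE -ltnNge => fv.
have [u evu fu] : exists2 u, e v u & 2 <= f u.
  move: fv; case fv: (nat_of_ord (f v)) => [|[|]] // _.
    exact: rdrd_zero_strong_nbr.
  exact: rdrd_one_strong_nbr.
by apply/existsP; exists u; rewrite inE evu andbT.
Qed.

Lemma rdrd_level1_restrained : is_restrained_dominating e (level_set f 1).
Proof.
apply/forallP => v; apply/implyP; rewrite inE -ltnNge ltnS leqn0 => /eqP fv.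
have [u evu fu] := rdrd_zero_strong_nbr fv.
have [w evw fw] := rdrd_zero_zero_nbr fv.
apply/andP; split; apply/existsP.
  by exists u; rewrite inE evu andbT; apply: leq_trans fu.
by exists w; rewrite !inE evw fw.
Qed.

Lemma rdrd_lower_bound :
  gamma e + gamma_r e <= #|level_set f 1| + #|level_set f 2|.
Proof.
rewrite addnC; apply: leq_add.
  exact: gamma_r_le rdrd_level1_restrained.
exact: gamma_le rdrd_level2_dominating.
Qed.

Lemma rdrd_level2_restrained2 :
  (forall u, f u != 3 :> nat) -> (forall u, f u != 1 :> nat) ->
  is_restrained_2dominating e (level_set f 2).
Proof.
move=> no3 no1; apply/forallP => t; apply/implyP; rewrite inE -ltnNge => ft.
have ft0 : f t = 0 :> nat by move: (no1 t) ft; case: (nat_of_ord (f t)) => [|[|]].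
have [w etw fw] := rdrd_zero_zero_nbr ft0.
apply/andP; split; last by apply/existsP; exists w; rewrite !inE fw etw.
apply: leq_trans (rdrd_zero_two_twos no3 ft0) _; apply: subset_leq_card.
by apply/subsetP => u; rewrite !inE => /andP [-> /eqP ->].
Qed.

End RDRDFunction.

(* An RDRD function is tight when its positive vertices form a minimum
   restrained dominating set.  Deleting vertices from that set must then
   destroy restrained domination, which forces strong local structure. *)
Section TightRDRD.

Variables (T : finType) (e : rel T) (f : {ffun T -> 'I_4}).
Hypothesis sym_e : symmetric e.
Hypothesis rdrd_f : is_rdrd e f.
Hypothesis tight : gamma_r e = #|level_set f 1|.

(* Every neighbour of a vertex of value 1 has value at least 2: otherwise the
   two endpoints could both be removed from the positive set. *)
Lemma tight_one_nbr_strong x y : f x = 1 :> nat -> e x y -> 2 <= f y.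
Proof.
move=> fx exy; rewrite leqNgt; apply/negP => fy.
set R := level_set f 1 :\: [set x; y].
have inR u : 2 <= f u -> u \in R.
  move=> fu; rewrite !inE negb_or; apply/andP; split; last by lia.
  by apply/andP; split; apply/eqP => eq_u; move: fu; rewrite eq_u; lia.
have R_restrained : is_restrained_dominating e R.
  apply/forallP => t; apply/implyP => tR.
  have [t_pos | t0] := boolP (0 < f t).
    have : t \in [set x; y] by move: tR; rewrite !inE t_pos andbT negbK.
    rewrite !inE => /orP [] /eqP t_eq; subst t.
      have [u exu fu] := rdrd_one_strong_nbr rdrd_f fx.
      apply/andP; split; apply/existsP; first by exists u; rewrite inR.
      by exists y; rewrite !inE eqxx orbT.
    have fy1 : f y = 1 :> nat by lia.
    have [u eyu fu] := rdrd_one_strong_nbr rdrd_f fy1.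
    apply/andP; split; apply/existsP; first by exists u; rewrite inR.
    by exists x; rewrite !inE eqxx sym_e.
  have ft : f t = 0 :> nat by lia.
  have [u etu fu] := rdrd_zero_strong_nbr rdrd_f ft.
  have [w etw fw] := rdrd_zero_zero_nbr rdrd_f ft.
  apply/andP; split; apply/existsP; first by exists u; rewrite inR.
  by exists w; rewrite !inE fw andbF.
have := gamma_r_le R_restrained; rewrite tight.
have := cardsID [set x; y] (level_set f 1).
have : 0 < #|level_set f 1 :&: [set x; y]|.
  by apply/card_gt0P; exists x; rewrite !inE eqxx fx.
rewrite -/R; lia.
Qed.

Hypothesis irr_e : irreflexive e.
Hypothesis no_three : forall u, f u != 3 :> nat.

(* A vertex of value 2 with a positive neighbour has no neighbour of value 0:
   otherwise it could be removed from the positive set. *)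
Lemma tight_two_no_zero_nbr w z y :
  f w = 2 :> nat -> e w z -> 0 < f z -> e w y -> f y != 0 :> nat.
Proof.
move=> fw ewz fz ewy; apply/eqP => fy.
set R := level_set f 1 :\ w.
have R_restrained : is_restrained_dominating e R.
  apply/forallP => t; apply/implyP => tR.
  have [t_pos | t0] := boolP (0 < f t).
    have -> : t = w by apply/eqP; move: tR; rewrite !inE t_pos andbT negbK.
    apply/andP; split; apply/existsP; last by exists y; rewrite !inE fy andbF.
    exists z; rewrite !inE fz ewz !andbT.
    by apply/eqP => zw; move: ewz; rewrite zw irr_e.
  have ft : f t = 0 :> nat by lia.
  have /card_gt1P [a [b [ha hb ab]]] := rdrd_zero_two_twos rdrd_f no_three ft.
  have [u uw] : exists2 u, u != w & u \in [set u in nbhd e t | f u == 2 :> nat].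
    by case: (eqVneq a w) => [aw | aw]; [exists b; rewrite // -aw eq_sym | exists a].
  rewrite !inE => /andP [etu /eqP fu].
  have [v etv fv] := rdrd_zero_zero_nbr rdrd_f ft.
  apply/andP; split; apply/existsP; first by exists u; rewrite !inE uw etu fu.
  by exists v; rewrite !inE fv andbF.
have := gamma_r_le R_restrained; rewrite tight.
by have := cardsD1 w (level_set f 1); rewrite inE fw -/R; lia.
Qed.

(* In a connected graph, one vertex of value 1 forces every vertex to be
   positive: the vertices of value 1, together with the vertices of value 2
   having a positive neighbour, form a set closed under adjacency. *)
Lemma tight_one_all_positive x :
  connected_graph e -> f x = 1 :> nat -> gamma_r e = #|T|.
Proof.
move=> conn fx.
pose A := [set t | (f t == 1 :> nat) ||
                   ((f t == 2 :> nat) && [exists z in nbhd e t, 0 < f z])].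
have A_closed t s : e t s -> t \in A -> s \in A.
  move=> ets; rewrite !inE => /orP [/eqP ft | /andP [/eqP ft /existsP [z]]].
    have := tight_one_nbr_strong ft ets; have := no_three s; have := ltn_ord (f s).
    move=> s4 s3 s2; have -> : f s = 2 :> nat by lia.
    by apply/existsP; exists t; rewrite inE sym_e ets ft.
  rewrite inE => /andP [etz fz].
  have := tight_two_no_zero_nbr ft etz fz ets; have := no_three s; have := ltn_ord (f s).
  case: (nat_of_ord (f s)) => [|[|[|[|]]]] //= _ _ _.
  by apply/existsP; exists t; rewrite inE sym_e ets ft.
have all_pos t : 0 < f t.
  have : t \in A by apply: (connected_closed_full sym_e conn A_closed (x := x)); rewrite inE fx.
  by rewrite inE => /orP [/eqP -> | /andP [/eqP -> _]].
suff L1_full : level_set f 1 = setT by rewrite tight L1_full cardsT.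
by apply/setP => t; rewrite !inE all_pos.
Qed.

End TightRDRD.

Definition pendant (T : finType) (e : rel T) (v c : T) : Prop :=
  forall a, e v a -> a = c.

Section SimpleGraph.

Variables (T : finType) (e : rel T).
Hypothesis sym_e : symmetric e.
Hypothesis irr_e : irreflexive e.

(* If the only restrained dominating set is V, every edge has a pendant
   endpoint: otherwise V minus both endpoints is restrained dominating. *)
Lemma full_gamma_r_pendant_edge x y :
  gamma_r e = #|T| -> e x y -> pendant e x y \/ pendant e y x.
Proof.
move=> full exy.
have [/existsP [a /andP [exa ay]] | /existsPn nx] := boolP [exists a, e x a && (a != y)];
  last by left => a exa; apply/eqP; move: (nx a); rewrite exa negbK.
have [/existsP [b /andP [eyb bx]] | /existsPn ny] := boolP [exists b, e y b && (b != x)];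
  last by right => b eyb; apply/eqP; move: (ny b); rewrite eyb negbK.
have nbr_out u v : e u v -> u != v by move=> euv; apply/eqP => uv; rewrite uv irr_e in euv.
set R := ~: [set x; y].
have R_restrained : is_restrained_dominating e R.
  apply/forallP => t; apply/implyP; rewrite !inE negbK => /orP [] /eqP ->.
    apply/andP; split; apply/existsP; last by exists y; rewrite !inE eqxx orbT.
    by exists a; rewrite !inE negb_or ay exa eq_sym nbr_out.
  apply/andP; split; apply/existsP; last by exists x; rewrite !inE eqxx sym_e.
  by exists b; rewrite !inE negb_or bx eyb andbT eq_sym nbr_out.
have := gamma_r_le R_restrained; rewrite full.
have := cardsC [set x; y].
have : 0 < #|[set x; y]| by apply/card_gt0P; exists x; rewrite !inE eqxx.
rewrite -/R; lia.
Qed.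

Lemma star_of_pendant_edges v c :
  connected_graph e -> (forall x y, e x y -> pendant e x y \/ pendant e y x) ->
  e v c -> pendant e v c -> is_star e.
Proof.
move=> conn pendant_edge evc v_pendant.
have vc : v != c by apply/eqP => vc; rewrite vc irr_e in evc.
have nbr_pendant u : e c u -> pendant e u c.
  move=> ecu; case: (eqVneq u v) => [-> // | uv].
  case: (pendant_edge c u ecu) => // c_pendant.
  by move: uv; rewrite -(c_pendant v) ?eqxx // sym_e.
have A_closed t s : e t s -> t \in c |: nbhd e c -> s \in c |: nbhd e c.
  move=> ets; rewrite !inE => /orP [/eqP tc | ect]; first by rewrite -tc ets orbT.
  by rewrite (nbr_pendant t ect s ets) eqxx.
have in_A t : t \in c |: nbhd e c.
  by apply: (connected_closed_full sym_e conn A_closed (x := c)); rewrite !inE eqxx.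
split.
  by have := subset_leq_card (subsetT [set v; c]); rewrite cards2 vc cardsT.
exists c; split.
  by move=> t tc; move: (in_A t); rewrite !inE (negbTE tc).
move=> u w uc wc; apply/negP => euw.
move: (in_A u); rewrite !inE (negbTE uc) /= => ecu.
by move: wc; rewrite (nbr_pendant u ecu w euw) eqxx.
Qed.

Lemma star_gamma_r : is_star e -> gamma_r e = #|T|.
Proof.
move=> [_ [c [c_adj leaves]]].
have [R R_restrained ->] := gamma_r_attain e.
suff R_full : R = setT by rewrite R_full cardsT.
apply/setP => v; rewrite inE; apply/negbNE/negP => vR.
move/forallP/(_ v): (R_restrained); rewrite vR.
move=> /andP [/existsP [u /andP [uR evu]] /existsP [x /andP [xR evx]]].
rewrite inE in xR.
have [vc | vc] := eqVneq v c.
  have xc : x != c by apply/eqP => xc; rewrite xc -vc irr_e in evx.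
  move/forallP/(_ x): R_restrained; rewrite xR => /andP [/existsP [y /andP [yR exy]] _].
  have yc : y != c by apply/eqP => yc; move: yR; rewrite yc -vc (negbTE vR).
  by rewrite (negbTE (leaves x y xc yc)) in exy.
have center_nbr w : e v w -> w = c.
  by move=> evw; apply/eqP; apply: contraTT evw => wc; exact: leaves.
by rewrite (center_nbr x evx) -(center_nbr u evu) uR in xR.
Qed.

Lemma star_gamma_rdR : is_star e -> gamma_rdR e <= #|T| + 1.
Proof.
move=> [_ [c [c_adj _]]].
pose f : {ffun T -> 'I_4} := [ffun v => inord (1 + (v == c))].
have fE v : f v = 1 + (v == c) :> nat by rewrite ffunE inordK //; case: (v == c).
have rdrd_f : is_rdrd e f.
  apply/forallP => v; rewrite fE; case: (eqVneq v c) => [// | vc] /=.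
  by rewrite andbT; apply/existsP; exists c; rewrite inE sym_e c_adj // fE eqxx.
apply: leq_trans (gamma_rdR_le rdrd_f) _; rewrite weight_levels /level_set.
have -> : [set v | 1 <= f v] = setT by apply/setP => v; rewrite !inE fE.
have -> : [set v | 2 <= f v] = [set c] by apply/setP => v; rewrite !inE fE; case: (v == c).
have -> : [set v | 3 <= f v] = set0 by apply/setP => v; rewrite !inE fE; case: (v == c).
by rewrite cardsT cards1 cards0 addn0.
Qed.

End SimpleGraph.

(* Value 2 on a minimum restrained 2-dominating set is an RDRD function. *)
Lemma gamma_rdR_le_twice_gamma_r2 (T : finType) (e : rel T) :
  gamma_rdR e <= 2 * gamma_r2 e.
Proof.
have [S S_r2 ->] := gamma_r2_attain e.
pose f : {ffun T -> 'I_4} := [ffun v => inord (2 * (v \in S))].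
have fE v : f v = 2 * (v \in S) :> nat by rewrite ffunE inordK //; case: (v \in S).
have rdrd_f : is_rdrd e f.
  apply/forallP => v; rewrite fE; case vS: (v \in S) => //=.
  move/forallP/(_ v): S_r2; rewrite vS /= => /andP [two_nbrs /existsP [u /andP [uS evu]]].
  apply/andP; split.
    rewrite andbT; apply/orP; left; apply: leq_trans two_nbrs _.
    by apply: subset_leq_card; apply/subsetP => w; rewrite !inE fE => /andP [-> ->].
  by apply/existsP; exists u; rewrite inE evu fE; move: uS; rewrite inE => /negbTE ->.
apply: leq_trans (gamma_rdR_le rdrd_f) _; rewrite weight_levels /level_set.
have -> : [set v | 1 <= f v] = S by apply/setP => v; rewrite !inE fE; case: (v \in S).
have -> : [set v | 2 <= f v] = S by apply/setP => v; rewrite !inE fE; case: (v \in S).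
have -> : [set v | 3 <= f v] = set0 by apply/setP => v; rewrite !inE fE; case: (v \in S).
by rewrite cards0 addn0 addnn -mul2n.
Qed.

(* An RDRD function attaining the lower bound gamma + gamma_r is tight, has
   no value 3, and gamma equals the number of vertices of value at least 2.
   If some vertex has value 1, tightness forces G to be a star; otherwise the
   vertices of value 2 are restrained 2-dominating, so gamma_r2 <= gamma. *)
Lemma extremal_rdrd_dichotomy (T : finType) (e : rel T) (f : {ffun T -> 'I_4}) :
  symmetric e -> irreflexive e -> connected_graph e -> is_rdrd e f ->
  weight f = gamma e + gamma_r e -> is_star e \/ gamma_r2 e <= gamma e.
Proof.
move=> sym irr conn rdrd_f extremal.
have dom := gamma_le (rdrd_level2_dominating rdrd_f).
have rdom := gamma_r_le (rdrd_level1_restrained rdrd_f).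
have := weight_levels f; rewrite extremal => split_weight.
have tight : gamma_r e = #|level_set f 1| by lia.
have no_three u : f u != 3 :> nat.
  apply/eqP => fu; have : 0 < #|level_set f 3| by apply/card_gt0P; exists u; rewrite inE fu.
  lia.
have [x /eqP fx | no_one] := pickP (fun v => f v == 1 :> nat).
  left; have full := tight_one_all_positive sym rdrd_f tight irr no_three conn fx.
  have pendant_edge := full_gamma_r_pendant_edge sym irr full.
  have [u exu _] := rdrd_one_strong_nbr rdrd_f fx.
  case: (pendant_edge x u exu) => [x_pendant | u_pendant].
    exact: (star_of_pendant_edges sym irr conn pendant_edge exu x_pendant).
  by apply: (star_of_pendant_edges sym irr conn pendant_edge _ u_pendant); rewrite sym.
right; have no_one' u : f u != 1 :> nat by rewrite no_one.
have := gamma_r2_le (rdrd_level2_restrained2 rdrd_f no_three no_one'); lia.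
Qed.

Theorem theorem2p8 (T : finType) (e : rel T) :
  simple_graph e -> connected_graph e ->
  gamma e + gamma_r e <= gamma_rdR e /\
  (gamma_rdR e = gamma e + gamma_r e <->
     is_star e \/ (gamma_r2 e = gamma_r e /\ gamma_r e = gamma e)).
Proof.
move=> [sym irr] conn.
have [f rdrd_f opt] := gamma_rdR_attain e.
have lower : gamma e + gamma_r e <= gamma_rdR e.
  by have := rdrd_lower_bound rdrd_f; rewrite opt weight_levels; lia.
have chain1 := gamma_le_gamma_r e; have chain2 := gamma_r_le_gamma_r2 e.
split=> //; split=> [extremal | [star | [r2_eq r_eq]]].
- rewrite opt in extremal.
  have [star | r2_le] := extremal_rdrd_dichotomy sym irr conn rdrd_f extremal.
    by left.
  by right; lia.
- have := star_gamma_rdR sym star; have := star_gamma_r irr star.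
  by have := gamma_pos e conn.1; lia.
- by have := gamma_rdR_le_twice_gamma_r2 e; lia.
Qed.
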